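(* Let $\epsilon\in(0,1)$. Let $x\in\{0,1\}^m$ and $y\in\{0,1\}^k$ be random variables satisfying the $\epsilon$-martingale condition with respect to the ordering $x_1,\dots,x_m,y_1,\dots,y_k$. Then \[ \Pr[\mu_x(y)\ge0]\le 3\exp\bigl(-\epsilon^4(1-O(\epsilon))k/64\bigr). \]
   Context: Characteristic strings and forks. A characteristic string is $w=w_1\dots w_n\in\{0,1\}^n$; index $i$ is honest if $w_i=0$ and adversarial if $w_i=1$. A fork for $w$ is a rooted tree with edges directed away from the root $r$ and labeling $\ell:V\to\{0,\dots,n\}$ with (F1) $\ell(r)=0$; (F2) labels strictly increasing along directed paths; (F3) each honest index labels exactly one vertex; (F4) for honest $i<j$ the vertex labeled $i$ has strictly smaller depth than the vertex labeled $j$. Write $F\vdash w$. A vertex is honest if it is the root or labeled by an honest index. A tine is a directed path from the root; its length is its number of edges, $\ell(t)$ the label of its last vertex. A fork is closed if every leaf is honest; a closed fork has a unique longest tine $\hat t$. For closed $F\vdash w$ and tine $t$: $\mathrm{gap}(t)=\mathrm{length}(\hat t)-\mathrm{length}(t)$, $\mathrm{reserve}(t)=|\{i:w_i=1,\ i>\ell(t)\}|$, $\mathrm{reach}(t)=\mathrm{reserve}(t)-\mathrm{gap}(t)$. For $w=xy$, tines are disjoint over $y$ if they share no edge terminating at a vertex with label $>|x|$ (a tine may be paired with itself). $\mu_x(F)=\max\min\{\mathrm{reach}(t_1),\mathrm{reach}(t_2)\}$ over pairs disjoint over $y$, and $\mu_x(y)=\max\{\mu_x(F):F\vdash xy\text{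 closed}\}$. A sequence of $\{0,1\}$-valued random variables $Z_1,\dots,Z_N$ satisfies the $\epsilon$-martingale condition if for every $t$, $\Pr[Z_t=1\mid Z_1,\dots,Z_{t-1}]\le(1-\epsilon)/2$ for arbitrary conditioning values. *)

From HB Require Import structures.
From mathcomp Require Import all_boot all_order all_algebra.
From mathcomp Require Import boolp reals.
From mathcomp Require Import sequences exp.
Set Implicit Arguments. Unset Strict Implicit. Unset Printing Implicit Defensive.
Import Order.TTheory GRing.Theory Num.Theory.

(* ---------- Characteristic strings ----------
   A characteristic string w = w_1 ... w_n is a [seq bool] of size n;
   w_i = nth false w (i-1); true = 1 = adversarial, false = 0 = honest. *)
Definition honest_idx (w : seq bool) (i : nat) : bool :=
  (0 < i <= size w) && ~~ nth false w i.-1.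
Definition adv_idx (w : seq bool) (i : nat) : bool :=
  (0 < i <= size w) && nth false w i.-1.

(* ---------- Forks ----------
   A (finite rooted) tree is encoded with vertices 0..fsize, vertex 0 being
   the root r; every non-root vertex v has a parent fpar v < v (so the edge
   fpar v -> v is directed away from the root).  Every finite rooted tree has
   such an encoding (number the vertices in BFS order).  flab is the labeling. *)
Record fork := Fork { fsize : nat; fpar : nat -> nat; flab : nat -> nat }.

Definition up (F : fork) (v : nat) : nat := if v is 0 then 0 else fpar F v.

Fixpoint depth_aux (F : fork) (fuel v : nat) : nat :=
  if fuel is fuel'.+1 then (if v is 0 then 0 else (depth_aux F fuel' (up F v)).+1)
  else 0.
(* depth = number of edges from the root (fpar v < v, so v steps suffice) *)
Definition depth (F : fork) (v : nat) : nat := depth_aux F v v.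

Definition is_fork (F : fork) (w : seq bool) : Prop :=
  [/\ (forall v, 0 < v <= fsize F -> fpar F v < v) /\
        (forall v, v <= fsize F -> flab F v <= size w),
      flab F 0 = 0,
      (forall v, 0 < v <= fsize F -> flab F (fpar F v) < flab F v),
      (forall i, honest_idx w i ->
         #|[pred v : 'I_(fsize F).+1 | flab F v == i]| = 1) &
      (forall u v, u <= fsize F -> v <= fsize F ->
         honest_idx w (flab F u) -> honest_idx w (flab F v) ->
         flab F u < flab F v -> depth F u < depth F v)].

Definition honest_vertex (F : fork) (w : seq bool) (v : nat) : bool :=
  (v == 0) || honest_idx w (flab F v).

Definition is_leaf (F : fork) (v : nat) : bool :=
  [forall u : 'I_(fsize F).+1, (0 < val u) ==> (fpar F u != v)].

Definition closed_fork (F : fork) (w : seq bool) : Prop :=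
  forall v, v <= fsize F -> is_leaf F v -> honest_vertex F w v.

(* Tines are in bijection with vertices: the tine of v is the unique path
   from the root to v; its length is depth v and l(t) = flab v.
   [on_tine F v u] : u is a vertex of the tine ending at v. *)
Definition on_tine (F : fork) (v u : nat) : bool :=
  [exists i : 'I_v.+1, iter i (up F) v == u].

Definition height (F : fork) : nat := \max_(v < (fsize F).+1) depth F v.

Definition gap (F : fork) (v : nat) : nat := height F - depth F v.

Definition reserve (F : fork) (w : seq bool) (v : nat) : nat :=
  #|[pred i : 'I_(size w).+1 | (flab F v < i) && adv_idx w i]|.

Definition reach (F : fork) (w : seq bool) (v : nat) : int :=
  ((reserve F w v)%:Z - (gap F v)%:Z)%R.

(* tines ending at v1, v2 are disjoint over y (|x| = m): they share no edge
   terminating at a vertex with label > m (edge terminating at u <-> u <> root) *)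
Definition disjoint_over (F : fork) (m v1 v2 : nat) : bool :=
  ~~ [exists u : 'I_(fsize F).+1,
        [&& 0 < val u, m < flab F u, on_tine F v1 u & on_tine F v2 u]].

(* mu_x(F) for w = x y with |x| = m : max over pairs of tines disjoint over y
   of min(reach t1, reach t2).  The pair (root, root) is always disjoint,
   so it serves as the initial value of the fold. *)
Definition mu_fork (m : nat) (w : seq bool) (F : fork) : int :=
  foldr Num.max (reach F w 0)
    [seq Num.min (reach F w (val p.1)) (reach F w (val p.2)) |
       p <- [seq (a, b) | a <- enum 'I_(fsize F).+1, b <- enum 'I_(fsize F).+1]
     & disjoint_over F m (val p.1) (val p.2)].

(* The event  mu_x(y) >= 0, where mu_x(y) = max over closed forks F |- xy of
   mu_x(F):  mu_x(y) >= 0  iff some closed fork F |- xy has mu_x(F) >= 0. *)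
Definition mu_ge0 (x y : seq bool) : Prop :=
  exists F : fork, [/\ is_fork F (x ++ y), closed_fork F (x ++ y)
                     & (0 <= mu_fork (size x) (x ++ y) F)%R].

Section Prob.
Variables (R : realType) (n : nat).
Local Open Scope ring_scope.

Definition is_distr (P : {ffun n.-tuple bool -> R}) : Prop :=
  (forall w, 0 <= P w) /\ \sum_(w : n.-tuple bool) P w = 1.

Definition Pr (P : {ffun n.-tuple bool -> R}) (E : n.-tuple bool -> Prop) : R :=
  \sum_(w : n.-tuple bool | `[< E w >]) P w.

(* epsilon-martingale condition for Z_1..Z_n (Z_{t+1} = nth false w t):
   Pr[Z_{t+1} = 1 | Z_1..Z_t = b] <= (1 - eps)/2 for every b, written
   multiplicatively (vacuous when the conditioning event has probability 0). *)
Definition eps_martingale (eps : R) (P : {ffun n.-tuple bool -> R}) : Prop :=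
  forall t, (t < n)%N -> forall b : seq bool, size b = t ->
    Pr P (fun w => take t w = b /\ nth false w t = true)
      <= (1 - eps) / 2 * Pr P (fun w => take t w = b).
End Prob.

From HB Require Import structures.
From mathcomp Require Import all_boot all_order all_algebra.
From mathcomp Require Import boolp reals.
From mathcomp Require Import sequences exp.
From mathcomp Require Import zify ring lra.
Import Order.TTheory GRing.Theory Num.Theory.
Set Implicit Arguments. Unset Strict Implicit. Unset Printing Implicit Defensive.

(* Fix a fork for x y and two of its tines that are
   disjoint over y, and follow, symbol by symbol, the reach of the part of each
   tine built so far, measured against the height of the honest vertices built
   so far.  A two-counter walk (g, r) driven by the characteristic string alone
   dominates both reaches: r bounds each of them, and once g > 0 one of them is
   at most -g.  The walk can make g positive only inside y, where the new honest
   vertex lies on at most one of the two tines; hence mu_x(y) >= 0 forces g = 0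
   at the end.  Under the eps-martingale condition the potential
   (1 + eps^2/4)^r / (1 + eps)^g has expectation at most 1/eps after x and
   contracts by 1 - eps^3/8 on every symbol of y.  As it is at least 1 when
   g = 0, Pr[mu_x(y) >= 0] <= (1 - eps^3/8)^k / eps <= 3 exp(-eps^4 k / 64). *)

Section Tines.
Variable F : fork.
Local Notation N := (fsize F).
Hypothesis fpar_lt : forall v, 0 < v <= N -> fpar F v < v.
Hypothesis flab_fpar_lt : forall v, 0 < v <= N -> flab F (fpar F v) < flab F v.

Definition ancestor v i := iter i (up F) v.

Lemma depth0 : depth F 0 = 0.
Proof. by []. Qed.

Lemma up_lt v : 0 < v -> v <= N -> up F v < v.
Proof. by case: v => // v _ hv; apply: fpar_lt; rewrite hv. Qed.

Lemma up_leq v : v <= N -> up F v <= v.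
Proof. by case: v => // v hv; apply/ltnW/up_lt. Qed.

Lemma flab_up_lt v : 0 < v -> v <= N -> flab F (up F v) < flab F v.
Proof. by case: v => // v _ hv; apply: flab_fpar_lt; rewrite hv. Qed.

Lemma ancestorS v i : ancestor v i.+1 = up F (ancestor v i).
Proof. by []. Qed.

Lemma ancestor_leq v i : v <= N -> ancestor v i <= v.
Proof.
move=> hv; elim: i => // i IH.
exact: leq_trans (up_leq (leq_trans IH hv)) IH.
Qed.

Lemma depth_aux_fuel f1 f2 v :
  v <= N -> v <= f1 -> v <= f2 -> depth_aux F f1 v = depth_aux F f2 v.
Proof.
elim: f1 f2 v => [|f1 IH] [|f2] [|v] // hN h1 h2 /=; congr S.
have := up_lt (v := v.+1) isT hN; have := up_leq (v := v.+1) hN => /= ??.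
apply: IH; lia.
Qed.

Lemma depth_up v : 0 < v -> v <= N -> depth F v = (depth F (up F v)).+1.
Proof.
case: v => // v _ hN; rewrite /depth /=; congr S.
have := up_lt (v := v.+1) isT hN; have := up_leq (v := v.+1) hN => /= ??.
apply: depth_aux_fuel; lia.
Qed.

Lemma depth_leq v : v <= N -> depth F v <= v.
Proof.
elim: v {-2}v (leqnn v) => [|n IH] [|v] // hv hN.
rewrite depth_up //; have := up_lt (v := v.+1) isT hN.
have := IH (up F v.+1); lia.
Qed.

Lemma depth_ancestor v i :
  v <= N -> i <= depth F v -> depth F (ancestor v i) = depth F v - i.
Proof.
move=> hN; elim: i => [|i IH] hi; first by rewrite subn0.
have hA : ancestor v i <= N := leq_trans (ancestor_leq i hN) hN.
have := IH (ltnW hi); rewrite ancestorS.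
case: (ancestor v i) hA => [|a] hA e; first by move: e; rewrite depth0; lia.
by have := depth_up (v := a.+1) isT hA; lia.
Qed.

Lemma ancestor_depth v : v <= N -> ancestor v (depth F v) = 0.
Proof.
by move=> hN; have := depth_ancestor hN (leqnn _); rewrite subnn; case: ancestor.
Qed.

Lemma ancestor_beyond v i : v <= N -> depth F v <= i -> ancestor v i = 0.
Proof.
move=> hN hi; rewrite -(subnK hi) /ancestor iterD -/(ancestor v (depth F v)).
by rewrite ancestor_depth //; elim: (i - depth F v) => //= j ->.
Qed.

Lemma flab_ancestor_lt v i j :
  v <= N -> i < j <= depth F v -> flab F (ancestor v j) < flab F (ancestor v i).
Proof.
move=> hN /andP[]; elim: j => // j IH hij hj.
have hA : ancestor v j <= N := leq_trans (ancestor_leq j hN) hN.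
have hpos : 0 < ancestor v j.
  have := depth_ancestor hN (ltnW hj).
  by case: (ancestor v j) => //; rewrite depth0; lia.
have step := flab_up_lt hpos hA; rewrite ancestorS.
case: (ltngtP i j) => [/IH/(_ (ltnW hj))||->]; lia.
Qed.

Lemma on_tineP v u :
  v <= N -> reflect (exists2 i, i <= depth F v & ancestor v i = u) (on_tine F v u).
Proof.
move=> hN; apply: (iffP existsP) => [[i /eqP hi]|[i hi <-]].
  case: (leqP i (depth F v)) => h; first by exists i.
  exists (depth F v) => //; rewrite ancestor_depth // -hi.
  exact/esym/ancestor_beyond/ltnW.
have hi' : i < v.+1 by have := depth_leq hN; lia.
by exists (Ordinal hi').
Qed.

Section OnTine.
Variable v : nat.
Hypothesis hv : v <= N.

Lemma on_tine_leq u : on_tine F v u -> u <= N.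
Proof. by case/(on_tineP _ hv) => i _ <-; exact: leq_trans (ancestor_leq i hv) hv. Qed.

Lemma on_tine_refl : on_tine F v v.
Proof. by apply/(on_tineP _ hv); exists 0. Qed.

Lemma on_tine_flab_leq u : on_tine F v u -> flab F u <= flab F v.
Proof.
case/(on_tineP _ hv) => -[|i] hi <- //.
exact/ltnW/(flab_ancestor_lt (i := 0) hv).
Qed.

Lemma on_tine_depth_leq u : on_tine F v u -> depth F u <= depth F v.
Proof. by case/(on_tineP _ hv) => i hi <-; rewrite depth_ancestor //; lia. Qed.

Lemma on_tine_flab_ltE u1 u2 : on_tine F v u1 -> on_tine F v u2 ->
  (flab F u1 < flab F u2) = (depth F u1 < depth F u2).
Proof.
case/(on_tineP _ hv) => i hi <-; case/(on_tineP _ hv) => j hj <-.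
rewrite !depth_ancestor //; case: (ltngtP i j) => [hij|hij|->]; last by rewrite !ltnn.
  have := flab_ancestor_lt (i := i) (j := j) hv ltac:(lia).
  by move=> ?; apply/idP/idP; lia.
have := flab_ancestor_lt (i := j) (j := i) hv ltac:(lia).
by move=> ?; apply/idP/idP; lia.
Qed.

Lemma on_tine_up u : on_tine F v u -> 0 < u ->
  on_tine F v (up F u) /\ depth F (up F u) = (depth F u).-1.
Proof.
move=> hu hpos; have huN := on_tine_leq hu; split; last by rewrite (depth_up hpos huN).
case/(on_tineP _ hv): hu hpos huN => i hi <- hpos _; apply/(on_tineP _ hv).
case: (ltnP i (depth F v)) => h; first by exists i.+1.
by rewrite ancestor_beyond in hpos.
Qed.

End OnTine.
End Tines.

Definition walk_step (active : bool) (s : nat * nat) (b : bool) : nat * nat :=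
  let: (g, r) := s in
  if b then (g.-1, r.+1)
  else if g == 0 then (if r == 0 then (nat_of_bool active, 0) else (0, r.-1))
  else (g.+1, r.-1).

(* Symbol [t'] (0-based) is active when it belongs to y, i.e. when [m <= t']. *)
Fixpoint walk (m : nat) (w : seq bool) (t : nat) : nat * nat :=
  if t is t'.+1 then walk_step (m <= t') (walk m w t') (nth false w t') else (0, 0).

Lemma walk_step_monotone a s :
  [/\ (walk_step a s true).1 <= s.1, s.2 <= (walk_step a s true).2,
      s.1 <= (walk_step a s false).1 & (walk_step a s false).2 <= s.2].
Proof. by case: s => -[|g] [|r]; case: a => /=; rewrite ?leqnn ?leq_pred. Qed.

Lemma walk_take m w t t' : t <= t' -> walk m w t = walk m (take t' w) t.
Proof. by elim: t => //= t IH ht; rewrite -IH ?nth_take // ltnW. Qed.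

Lemma walk_inactive m w t : t <= m -> (walk m w t).1 = 0.
Proof.
elim: t => //= t IH ht; move: (IH (ltnW ht)); rewrite leqNgt ht.
by case: (walk m w t) => g r /= ->; case: nth; case: r.
Qed.

Section ReachProfile.
Local Open Scope ring_scope.
Variables (w : seq bool) (hit : nat -> bool) (u : nat -> int).

(* [u t] evolves like the reach at time [t] of a tine, and [hit t] says that the
   tine passes through the honest vertex labelled [t.+1]. *)
Definition reach_profile : Prop :=
  u 0%N = 0 /\
  forall t, (t < size w)%N ->
    if nth false w t then u t.+1 <= u t + 1
    else if hit t then (0 <= u t) && (u t.+1 <= 0) else u t.+1 < u t.

Lemma reach_profile_honest t (r : nat) : reach_profile ->
  (t < size w)%N -> ~~ nth false w t -> u t <= r%:Z ->
  [/\ u t.+1 <= (r.-1)%:Z, u t < 0 -> u t.+1 < u t & ~~ hit t -> u t.+1 < u t].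
Proof.
case=> _ /(_ t) step ht /negbTE hb; move: (step ht); rewrite hb.
by case: (hit t) => [/andP[]|]; split; lia.
Qed.

End ReachProfile.

Section WalkDominatesReach.
Local Open Scope ring_scope.
Variables (m : nat) (w : seq bool) (hit1 hit2 : nat -> bool) (u1 u2 : nat -> int).
Hypotheses (u1_profile : reach_profile w hit1 u1) (u2_profile : reach_profile w hit2 u2).
Hypothesis hits_disjoint :
  forall t, (m <= t < size w)%N -> ~~ nth false w t -> ~~ (hit1 t && hit2 t).

Lemma walk_invariant t : (t <= size w)%N ->
  let: (g, r) := walk m w t in
  [/\ u1 t <= r%:Z, u2 t <= r%:Z & (0 < g)%N -> u1 t + g%:Z <= 0 \/ u2 t + g%:Z <= 0].
Proof.
elim: t => [|t IH] ht; first by rewrite /= u1_profile.1 u2_profile.1.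
move: (IH (ltnW ht)) => /=; case: (walk m w t) => g r [r1 r2 gap].
case hb: (nth false w t) => /=.
  move: (u1_profile.2 t ht) (u2_profile.2 t ht); rewrite hb.
  by split; lia.
have hon : ~~ nth false w t by rewrite hb.
have [a1 b1 c1] := reach_profile_honest u1_profile ht hon r1.
have [a2 b2 c2] := reach_profile_honest u2_profile ht hon r2.
case: g gap => [|g] gap /=.
  (* Inside y, the new honest vertex misses one of the tines, whose reach drops below 0. *)
  case: r a1 a2 r1 r2 => [|r] a1 a2 r1 r2 //=; split=> //; case: (leqP m t) => //= hm _.
  move: (hits_disjoint (introT andP (conj hm ht)) hon).
  by rewrite negb_and => /orP[/c1|/c2]; lia.
split=> // _; case: (gap isT) => h.
  by have := b1 ltac:(lia); lia.
by have := b2 ltac:(lia); lia.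
Qed.

Lemma walk_gap_end : 0 <= u1 (size w) -> 0 <= u2 (size w) -> (walk m w (size w)).1 = 0%N.
Proof. by have := walk_invariant (leqnn _); case: walk => -[|g] r //= [_ _ /(_ isT)]; lia. Qed.

End WalkDominatesReach.

Section ForkReach.
Variables (F : fork) (w : seq bool).
Hypothesis F_fork : is_fork F w.
Local Notation N := (fsize F).
Local Notation n := (size w).

Let fpar_lt : forall v, 0 < v <= N -> fpar F v < v.
Proof. by case: F_fork => -[]. Qed.
Let flab_leq_size : forall v, v <= N -> flab F v <= n.
Proof. by case: F_fork => -[]. Qed.
Let flab_root : flab F 0 = 0.
Proof. by case: F_fork. Qed.
Let flab_fpar_lt : forall v, 0 < v <= N -> flab F (fpar F v) < flab F v.
Proof. by case: F_fork. Qed.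
Let honest_label_once : forall i, honest_idx w i -> #|[pred v : 'I_N.+1 | flab F v == i]| = 1.
Proof. by case: F_fork. Qed.
Let honest_depth_mono : forall u v, u <= N -> v <= N ->
  honest_idx w (flab F u) -> honest_idx w (flab F v) -> flab F u < flab F v -> depth F u < depth F v.
Proof. by case: F_fork. Qed.

Lemma honest_vertex_unique i (x : 'I_N.+1) :
  honest_idx w i -> flab F x = i -> forall u : 'I_N.+1, flab F u = i -> u = x.
Proof.
move=> hi hx u hu; have [y hy] := mem_card1 (honest_label_once hi).
by move: (hy u) (hy x); rewrite !inE hu hx eqxx => /esym/eqP -> /esym/eqP ->.
Qed.

Lemma honest_vertex_exists i : honest_idx w i -> exists x : 'I_N.+1, flab F x = i.
Proof.
by move/honest_label_once/mem_card1 => [x /(_ x)]; rewrite !inE eqxx => /eqP; exists x.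
Qed.

Lemma honest_or_adv i : 0 < i <= n -> ~~ adv_idx w i -> honest_idx w i.
Proof. by rewrite /honest_idx /adv_idx => ->. Qed.

Lemma honest_notadv i : honest_idx w i -> ~~ adv_idx w i.
Proof. by rewrite /honest_idx /adv_idx => /andP[-> /negbTE ->]. Qed.

Lemma flab_gt0 v : 0 < v <= N -> 0 < flab F v.
Proof. by move/flab_fpar_lt; lia. Qed.

Lemma depth_leq_height v : v <= N -> depth F v <= height F.
Proof. by move=> hv; apply: (bigop.leq_bigmax (Ordinal (hv : v < N.+1))). Qed.

Definition honest_height t :=
  \max_(u < N.+1 | honest_idx w (flab F u) && (flab F u <= t)) depth F u.

Definition tine_height v t := \max_(u < N.+1 | on_tine F v u && (flab F u <= t)) depth F u.

Definition adv_count l t := \sum_(i < t.+1) ((l < i) && adv_idx w i).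

Definition tine_hits v i := [exists u : 'I_N.+1, (flab F u == i) && on_tine F v u].

(* Time-[t] analogue of [reach F w v], measured against [honest_height t]. *)
Definition reach_at v t : int :=
  ((tine_height v t + adv_count (flab F v) t)%:Z - (honest_height t)%:Z)%R.

Lemma honest_height0 : honest_height 0 = 0.
Proof. by apply/eqP; rewrite -leqn0; apply/bigop.bigmax_leqP => u; rewrite /honest_idx; lia. Qed.

Lemma honest_height_adv t : adv_idx w t.+1 -> honest_height t.+1 = honest_height t.
Proof.
move=> ha; have hna : honest_idx w t.+1 = false by apply/negP => /honest_notadv; rewrite ha.
by apply: eq_bigl => u; rewrite leq_eqVlt ltnS; case: eqP => // ->; rewrite hna.
Qed.

Lemma honest_height_honest t (x : 'I_N.+1) : honest_idx w t.+1 -> flab F x = t.+1 ->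
  honest_height t.+1 = depth F x /\ honest_height t < depth F x.
Proof.
move=> hh hx.
have below (u : 'I_N.+1) : honest_idx w (flab F u) -> flab F u <= t -> depth F u < depth F x.
  by move=> hu hut; apply: honest_depth_mono; rewrite ?leq_ord ?hx ?ltnS.
have hpos : 0 < depth F x.
  by case: (nat_of_ord x) hx => [|v]; rewrite ?flab_root.
split.
  apply/eqP; rewrite eqn_leq; apply/andP; split; last first.
    by apply: (bigop.bigmax_sup x); rewrite ?hx ?hh ?leqnn.
  apply/bigop.bigmax_leqP => u /andP[hu]; rewrite leq_eqVlt ltnS => /orP[/eqP hut|hut].
    by rewrite (honest_vertex_unique hh hx hut).
  exact/ltnW/below.
have : honest_height t <= (depth F x).-1.
  by apply/bigop.bigmax_leqP => u /andP[hu hut]; have := below u hu hut; lia.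
lia.
Qed.

Lemma honest_height_leq t : honest_height t <= height F.
Proof. by apply/bigop.bigmax_leqP => u _; apply/depth_leq_height/leq_ord. Qed.

Lemma adv_countS l t : adv_count l t.+1 = adv_count l t + ((l < t.+1) && adv_idx w t.+1).
Proof. by rewrite /adv_count big_ord_recr. Qed.

Lemma adv_count_eq0 l t : t <= l -> adv_count l t = 0.
Proof. by move=> h; apply: big1 => i _; have := ltn_ord i; case: ltnP => //; lia. Qed.

Lemma reserveE v : reserve F w v = adv_count (flab F v) n.
Proof.
rewrite /reserve /adv_count -sum1_card big_mkcond /=.
by apply: eq_bigr => i _; rewrite inE; case: (_ && _).
Qed.

Section Tine.
Variable v : nat.
Hypothesis v_vertex : v <= N.

Lemma tine_height0 : tine_height v 0 = 0.
Proof.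
apply/eqP; rewrite -leqn0; apply/bigop.bigmax_leqP => u /andP[hu].
case: (posnP u) => [-> //|u_gt0].
by have := flab_gt0 (introT andP (conj u_gt0 (on_tine_leq fpar_lt v_vertex hu))); lia.
Qed.

Lemma tine_height_hit t (x : 'I_N.+1) : on_tine F v x -> flab F x = t.+1 ->
  [/\ tine_height v t.+1 = depth F x, tine_height v t = (depth F x).-1 & 0 < depth F x].
Proof.
move=> hx hl.
have x_gt0 : 0 < x by case: (posnP x) hl => // ->; rewrite flab_root.
have hdepth : 0 < depth F x by move: x_gt0; case: (nat_of_ord x).
have order := on_tine_flab_ltE fpar_lt flab_fpar_lt v_vertex.
split=> //; apply/eqP; rewrite eqn_leq; apply/andP; split.
- apply/bigop.bigmax_leqP => u /andP[hu hut].
  by have := order _ _ hx hu; have := order _ _ hu hx; lia.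
- by apply: (bigop.bigmax_sup x); rewrite ?hx ?hl ?leqnn.
-
  by apply/bigop.bigmax_leqP => u /andP[hu hut]; have := order _ _ hu hx; lia.
have [hup hupd] := on_tine_up fpar_lt v_vertex hx x_gt0.
have hupN := on_tine_leq fpar_lt v_vertex hup.
have := flab_up_lt flab_fpar_lt x_gt0 (on_tine_leq fpar_lt v_vertex hx).
by move=> hul; rewrite -hupd; apply: (bigop.bigmax_sup (Ordinal (hupN : up F x < N.+1))); rewrite //= hup; lia.
Qed.

Lemma tine_height_miss t : ~~ tine_hits v t.+1 -> tine_height v t.+1 = tine_height v t.
Proof.
move=> hmiss; apply: eq_bigl => u; case: (boolP (on_tine F v u)) => //= hu.
rewrite leq_eqVlt ltnS; case: eqP => //= hl.
by case/negP: hmiss; apply/existsP; exists u; rewrite hl eqxx.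
Qed.

Lemma tine_height_end : tine_height v n = depth F v.
Proof.
apply/eqP; rewrite eqn_leq; apply/andP; split.
  by apply/bigop.bigmax_leqP => u /andP[hu _]; exact: on_tine_depth_leq.
by apply: (bigop.bigmax_sup (Ordinal (v_vertex : v < N.+1))); rewrite //= on_tine_refl // flab_leq_size.
Qed.

Lemma reach_at0 : reach_at v 0 = 0%R.
Proof. by rewrite /reach_at tine_height0 honest_height0 adv_count_eq0. Qed.

Lemma reach_at_adv t : adv_idx w t.+1 -> (reach_at v t.+1 <= reach_at v t + 1)%R.
Proof.
move=> ha; rewrite /reach_at honest_height_adv // adv_countS ha andbT.
case: (boolP (tine_hits v t.+1)) => [/existsP[x /andP[/eqP hl hx]]|hmiss].
  have [-> -> _] := tine_height_hit hx hl.
  have := on_tine_flab_leq fpar_lt flab_fpar_lt v_vertex hx.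
  by rewrite ltnNge -hl => ->; lia.
by rewrite tine_height_miss //; case: (_ < _); lia.
Qed.

Lemma reach_at_hit t (x : 'I_N.+1) : honest_idx w t.+1 -> on_tine F v x -> flab F x = t.+1 ->
  reach_at v t.+1 = 0%R /\ (0 <= reach_at v t)%R.
Proof.
move=> hh hx hl; have [hD1 hD2] := honest_height_honest hh hl.
have [hT1 hT2 hpos] := tine_height_hit hx hl.
have hle : t.+1 <= flab F v by rewrite -hl; exact: on_tine_flab_leq.
by rewrite /reach_at hD1 hT1 hT2 !adv_count_eq0 //; lia.
Qed.

Lemma reach_at_miss t : honest_idx w t.+1 -> ~~ tine_hits v t.+1 ->
  (reach_at v t.+1 < reach_at v t)%R.
Proof.
move=> hh hmiss; have [x hx] := honest_vertex_exists hh.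
have [hD1 hD2] := honest_height_honest hh hx.
rewrite /reach_at tine_height_miss // hD1 adv_countS (negbTE (honest_notadv hh)) andbF addn0.
lia.
Qed.

Lemma reach_leq_reach_at : (reach F w v <= reach_at v n)%R.
Proof.
rewrite /reach /gap reserveE /reach_at tine_height_end.
have := honest_height_leq n; have := depth_leq_height v_vertex; lia.
Qed.

Lemma reach_at_profile : reach_profile w (fun t => tine_hits v t.+1) (reach_at v).
Proof.
split=> [|t ht]; first exact: reach_at0.
have hi : 0 < t.+1 <= n by rewrite ht.
case: (boolP (adv_idx w t.+1)) => [ha|/(honest_or_adv hi) hh].
  by move: (ha); rewrite /adv_idx hi /= => ->; exact: reach_at_adv.
move: (hh); rewrite /honest_idx hi /= => /negbTE ->.
case: (boolP (tine_hits v t.+1)) => [/existsP[x /andP[/eqP hl hx]]|hmiss].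
  by have [-> ->] := reach_at_hit hh hx hl.
exact: reach_at_miss.
Qed.

End Tine.

Lemma tine_hits_disjoint m v1 v2 t : disjoint_over F m v1 v2 -> m <= t -> honest_idx w t.+1 ->
  ~~ (tine_hits v1 t.+1 && tine_hits v2 t.+1).
Proof.
move=> hdis hm hh; apply/andP => -[/existsP[x1 /andP[/eqP hl1 hx1]] /existsP[x2 /andP[/eqP hl2 hx2]]].
move: hx2; rewrite (honest_vertex_unique hh hl1 hl2) => hx2.
case/existsP: hdis; exists x1; rewrite hx1 hx2 hl1 ltnS hm !andbT.
by case: (posnP x1) hl1 => // ->; rewrite flab_root.
Qed.

End ForkReach.

Lemma foldr_max_ge d (T : orderType d) (a x0 : T) s : (a <= foldr Order.max x0 s)%O ->
  (a <= x0)%O \/ exists2 y, y \in s & (a <= y)%O.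
Proof.
elim: s => [|b s IH] /=; first by left.
rewrite Order.TotalTheory.le_max => /orP[h|/IH[h|[y hy h]]]; last 2 first.
- by left.
- by right; exists y; rewrite ?inE ?hy ?orbT.
by right; exists b; rewrite ?inE ?eqxx.
Qed.

Lemma mu_fork_ge0_disjoint_pair F m w : (0 <= mu_fork m w F)%R -> exists v1 v2,
  [/\ v1 <= fsize F, v2 <= fsize F, disjoint_over F m v1 v2,
      (0 <= reach F w v1)%R & (0 <= reach F w v2)%R].
Proof.
case/foldr_max_ge => [h|[y /mapP[[a b]]]].
  exists 0, 0; split=> //; apply/negP => /existsP[u /and4P[u_gt0 _ /existsP[i /eqP hi] _]].
  by move: hi u_gt0; case: i => -[|] //= _ <-.
rewrite mem_filter => /andP[hd _] -> /=.
rewrite le_min => /andP[h1 h2].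
by exists a, b; split; rewrite ?leq_ord.
Qed.

Lemma mu_ge0_walk_gap m w : m <= size w -> mu_ge0 (take m w) (drop m w) -> (walk m w (size w)).1 = 0.
Proof.
move=> hm [F []]; rewrite cat_take_drop size_takel // => hF _.
case/mu_fork_ge0_disjoint_pair => v1 [v2 [hv1 hv2 hdis r1 r2]].
apply: (walk_gap_end (reach_at_profile hF hv1) (reach_at_profile hF hv2)).
- move=> t /andP[hmt ht] hon; apply: (tine_hits_disjoint hF hdis hmt).
  by rewrite /honest_idx ht.
- exact: le_trans r1 (reach_leq_reach_at hF hv1).
- exact: le_trans r2 (reach_leq_reach_at hF hv2).
Qed.

Section Potential.
Local Open Scope ring_scope.
Variables (R : realFieldType) (e : R).

Local Notation z := (1 + e ^+ 2 / 4).
Local Notation y := (1 + e).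
Local Notation q := ((1 - e) / 2).

Definition potential (s : nat * nat) : R := z ^+ s.2 / y ^+ s.1.

(* Since an adversarial symbol never lowers the potential, this bounds its
   conditional expectation after one step from [s]. *)
Definition step_mean (active : bool) (s : nat * nat) : R :=
  potential (walk_step active s false) +
  q * (potential (walk_step active s true) - potential (walk_step active s false)).

Let z_ge1 : 1 <= z.
Proof. by have := sqr_ge0 e; lra. Qed.

Lemma potential_ge0 s : 0 <= e -> 0 <= potential s.
Proof. by move=> e_ge0; apply: divr_ge0; apply: exprn_ge0; have := z_ge1; lra. Qed.

Lemma potential_gap0 r : 1 <= potential (0, r).
Proof. by rewrite /potential /= expr0 divr1; apply/exprn_ege1/z_ge1. Qed.

Lemma potentialSr g r : potential (g, r.+1) = z * potential (g, r).
Proof. by rewrite /potential /= [z ^+ _.+1]exprS mulrA. Qed.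

Lemma potentialSg g r : potential (g.+1, r) = potential (g, r) / y.
Proof. by rewrite /potential /= [y ^+ _.+1]exprSr invfM mulrA. Qed.

Lemma potential_monotone g1 r1 g2 r2 : 0 <= e -> (g1 <= g2)%N -> (r2 <= r1)%N ->
  potential (g2, r2) <= potential (g1, r1).
Proof.
move=> e_ge0 hg hr; rewrite /potential /= -!exprVn.
have hz := z_ge1; have yV_ge0 : 0 <= y^-1 by rewrite invr_ge0; lra.
apply: ler_pM; rewrite ?exprn_ge0 //; first lra.
  exact: ler_weXn2l.
by apply: ler_wiXn2l; rewrite // invf_le1; lra.
Qed.

Lemma potential_honest_leq_adv a s : 0 <= e ->
  potential (walk_step a s false) <= potential (walk_step a s true).
Proof.
case: s => g r e_ge0; have [ht1 ht2 hf1 hf2] := walk_step_monotone a (g, r).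
move: (walk_step a _ true) (walk_step a _ false) ht1 ht2 hf1 hf2 => [gt rt] [gf rf] /= *.
apply: (@le_trans _ _ (potential (g, r))); apply: potential_monotone => //; lia.
Qed.

Lemma contraction_ge0 : 0 < e < 1 -> 0 <= 1 - e ^+ 3 / 8.
Proof.
case/andP=> e_gt0 e_lt1; have : e ^+ 3 <= 1 by apply: exprn_ile1; lra.
lra.
Qed.

(* An active honest symbol divides the potential by z (spending reserve) or by
   at least y (opening a gap); an adversarial one multiplies it by z, resp. at
   most z y. *)
Lemma contraction_reserve : 0 < e < 1 -> (1 - q) / z + q * z <= 1 - e ^+ 3 / 8.
Proof.
case/andP=> e_gt0 e_lt1; have z_gt0 : 0 < z by have := z_ge1; lra.
rewrite -(ler_pM2r z_gt0) mulrDl mulfVK ?gt_eqF //.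
have : 0 <= e ^+ 3 * (4 - e) by apply: mulr_ge0; [exact: exprn_ge0 (ltW e_gt0) | lra].
have -> : (1 - e ^+ 3 / 8) * z = (1 - q) + q * z * z + e ^+ 3 * (4 - e) / 32 by field.
lra.
Qed.

Lemma contraction_gap : 0 < e < 1 -> (1 - q) / y + q * (z * y) <= 1 - e ^+ 3 / 8.
Proof.
case/andP=> e_gt0 e_lt1.
have -> : (1 - q) / y + q * (z * y) = 1 - e ^+ 2 * (3 + e ^+ 2) / 8.
  by field; rewrite gt_eqF //; lra.
suff : e ^+ 3 <= e ^+ 2 * (3 + e ^+ 2) by lra.
by rewrite exprS mulrC ler_wpM2l ?sqr_ge0 //; have := sqr_ge0 e; lra.
Qed.

Lemma step_mean_contract a s (alpha beta : R) : 0 < e < 1 ->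
  (1 - q) * alpha + q * beta <= 1 - e ^+ 3 / 8 ->
  potential (walk_step a s false) <= alpha * potential s ->
  potential (walk_step a s true) <= beta * potential s ->
  step_mean a s <= (1 - e ^+ 3 / 8) * potential s.
Proof.
case/andP=> e_gt0 e_lt1 hmean hf ht.
have q_ge0 : 0 <= q by lra.
have q_le1 : 0 <= 1 - q by lra.
have := ler_wpM2l q_le1 hf; have := ler_wpM2l q_ge0 ht.
have := ler_wpM2r (potential_ge0 s (ltW e_gt0)) hmean.
rewrite /step_mean; lra.
Qed.

Lemma step_mean_active s : 0 < e < 1 -> step_mean true s <= (1 - e ^+ 3 / 8) * potential s.
Proof.
move=> he; have /andP[e_gt0 e_lt1] := he; have hz := z_ge1.
have y_gt0 : 0 < y by lra.
have y_neq0 : y != 0 by rewrite gt_eqF.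
have P_ge0 g r : 0 <= potential (g, r) by exact: potential_ge0 (ltW e_gt0).
case: s => -[|g] [|r]; [apply: (step_mean_contract he (contraction_gap he)) |
  apply: (step_mean_contract he (contraction_reserve he)) | apply: (step_mean_contract he (contraction_gap he)) ..];
  rewrite /= ?potentialSr ?potentialSg; set Z := z in hz *.
- by rewrite mulrC.
- rewrite mulrAC; apply: ler_peMr; last lra.
  exact: mulr_ge0 (le_trans ler01 hz) (P_ge0 _ _).
- by rewrite mulKf // gt_eqF //; lra.
- by [].
- by rewrite [y^-1 * _]mulrC.
- by rewrite [leRHS](_ : _ = Z * potential (g, 0)) //; field.
- rewrite [leRHS]mulrC ler_pM2r ?invr_gt0 //.
  exact: ler_peMl (divr_ge0 (P_ge0 _ _) (ltW y_gt0)) hz.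
- by rewrite [leRHS](_ : _ = Z * (Z * potential (g, r))) //; field.
Qed.

Lemma step_mean_inactive r : 0 < e < 1 ->
  step_mean false (0, r) <= (1 - e ^+ 3 / 8) * potential (0, r) + e ^+ 2 / 8.
Proof.
move=> he; have e_gt0 : 0 <= e by case/andP: he => /ltW.
case: r => [|r].
  by rewrite /step_mean /potential /= !expr0 expr1 !divr1; lra.
suff : step_mean false (0, r.+1) <= (1 - e ^+ 3 / 8) * potential (0, r.+1).
  by have := sqr_ge0 e; lra.
apply: (step_mean_contract he (contraction_reserve he)) => /=; rewrite !potentialSr.
  by rewrite mulrA mulVf ?mul1r //; have := z_ge1; lra.
by rewrite mulrA.
Qed.

End Potential.

Section Expectation.
Local Open Scope ring_scope.
Variables (R : realType) (n : nat) (P : {ffun n.-tuple bool -> R}).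

Lemma PrE (E : n.-tuple bool -> Prop) : Pr P E = \sum_w P w * (`[< E w >] : bool)%:R.
Proof.
rewrite /Pr big_mkcond /=; apply: eq_bigr => w _.
by case: `[< E w >]; rewrite ?mulr1 ?mulr0.
Qed.

Lemma PrP (E : n.-tuple bool -> Prop) (e : pred (n.-tuple bool)) :
  (forall w, reflect (E w) (e w)) -> Pr P E = \sum_w P w * (e w)%:R.
Proof.
by move=> hE; rewrite PrE; apply: eq_bigr => w _; rewrite (asbool_equiv_eqP (hE w)).
Qed.

Lemma Pr_le_mean (f : n.-tuple bool -> R) (E : n.-tuple bool -> Prop) :
  (forall w, 0 <= P w) -> (forall w, 0 <= f w) -> (forall w, E w -> 1 <= f w) ->
  Pr P E <= \sum_w P w * f w.
Proof.
move=> P_ge0 f_ge0 f_ge1; rewrite PrE; apply: ler_sum => w _; apply: ler_wpM2l => //.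
by case: (boolP `[< E w >]) => [/asboolW/f_ge1|_]; rewrite ?f_ge0.
Qed.

Lemma Pr_le1 (E : n.-tuple bool -> Prop) : is_distr P -> Pr P E <= 1.
Proof.
case=> P_ge0 P_sum1; apply: le_trans (Pr_le_mean (f := fun=> 1) P_ge0 _ _) _ => //.
by under eq_bigr do rewrite mulr1; rewrite P_sum1.
Qed.

Lemma sum_prefix_indicator t (w : n.-tuple bool) (phi : seq bool -> R) : (t <= n)%N ->
  \sum_(b : t.-tuple bool) (take t w == b :> seq bool)%:R * phi b = phi (take t w).
Proof.
move=> ht; have hs : size (take t w) == t by rewrite size_takel // size_tuple.
rewrite (bigD1 (Tuple hs)) //= eqxx mul1r big1 ?addr0 // => b hb.
by case: eqP => [e|]; rewrite ?mul0r //; case/eqP: hb; apply: val_inj.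
Qed.

Lemma eps_martingale_weighted eps t (phi : seq bool -> R) :
  eps_martingale eps P -> (t < n)%N -> (forall s, 0 <= phi s) ->
  \sum_w P w * ((nth false w t)%:R * phi (take t w))
    <= (1 - eps) / 2 * \sum_w P w * phi (take t w).
Proof.
move=> hmart ht phi_ge0.
have by_prefix (c : n.-tuple bool -> bool) :
    \sum_w P w * ((c w)%:R * phi (take t w)) =
    \sum_(b : t.-tuple bool) phi b * \sum_w P w * ((take t w == b :> seq bool) && c w)%:R.
  under eq_bigr => w _ do rewrite -(sum_prefix_indicator w phi (ltnW ht)) !mulr_sumr.
  rewrite exchange_big /=; apply: eq_bigr => b _; rewrite mulr_sumr.
  by apply: eq_bigr => w _; case: (_ == _); case: (c w) => /=; ring.
rewrite (by_prefix (nth false ^~ t)).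
under [X in _ <= _ * X]eq_bigr => w _ do rewrite -[phi _]mul1r.
rewrite (by_prefix xpredT) mulr_sumr; apply: ler_sum => b _.
rewrite mulrCA ler_wpM2l //.
move: (hmart t ht b (size_tuple b)).
rewrite (PrP (fun w => andPP eqP idP)) (PrP (fun w => eqP)).
by under [X in _ -> _ <= _ * X]eq_bigr do rewrite andbT.
Qed.

Section MeanPotential.
Variables (e : R) (m : nat).
Hypotheses (he : 0 < e < 1) (P_distr : is_distr P) (P_mart : eps_martingale e P).

Definition mean_potential t := \sum_w P w * potential e (walk m w t).

Let P_ge0 : forall w, 0 <= P w. Proof. by case: P_distr. Qed.

Lemma mean_potential_affine (a c : R) t :
  \sum_w P w * (a * potential e (walk m w t) + c) = a * mean_potential t + c.
Proof.
case: P_distr => _ P_sum1; rewrite /mean_potential mulr_sumr -[c in RHS]mul1r -P_sum1 mulr_suml.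
by rewrite -big_split /=; apply: eq_bigr => w _; ring.
Qed.

Lemma mean_potential_step t : (t < n)%N ->
  mean_potential t.+1 <= \sum_w P w * step_mean e (m <= t)%N (walk m w t).
Proof.
move=> ht; pose Phi b s := potential e (walk_step (m <= t)%N (walk m s t) b).
have walkS w : potential e (walk m w t.+1) =
    Phi false (take t w) + (nth false w t)%:R * (Phi true (take t w) - Phi false (take t w)).
  by rewrite /Phi -walk_take //=; case: nth => /=; ring.
rewrite /mean_potential; under eq_bigr => w _ do rewrite walkS mulrDr.
have jump_ge0 s : 0 <= Phi true s - Phi false s.
  by rewrite subr_ge0 potential_honest_leq_adv //; case/andP: he => /ltW.
rewrite big_split /=; apply: le_trans (lerD (lexx _) (eps_martingale_weighted P_mart ht jump_ge0)) _.
rewrite mulr_sumr -big_split /=; apply: ler_sum => w _.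
by rewrite /Phi /step_mean -walk_take // [leRHS]mulrDr (mulrCA (P w) ((1 - e) / 2)).
Qed.

Lemma mean_potential_inactive t : (t <= m)%N -> (t <= n)%N -> mean_potential t <= e^-1.
Proof.
have /andP[e_gt0 e_lt1] := he.
elim: t => [|t IH] htm htn.
  have -> : mean_potential 0 = 1.
    by case: P_distr => _ <-; apply: eq_bigr => w _; rewrite /potential /= !expr0 divr1 mulr1.
  by rewrite invf_ge1 //; lra.
apply: le_trans (mean_potential_step htn) _.
have inactive w : step_mean e (m <= t)%N (walk m w t) <=
    (1 - e ^+ 3 / 8) * potential e (walk m w t) + e ^+ 2 / 8.
  rewrite leqNgt htm; have := walk_inactive w (ltnW htm).
  by case: walk => g r /= ->; exact: step_mean_inactive.
apply: le_trans (ler_sum _ (fun w _ => ler_wpM2l (P_ge0 w) (inactive w))) _.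
rewrite mean_potential_affine.
apply: le_trans (lerD (ler_wpM2l (contraction_ge0 he) (IH (ltnW htm) (ltnW htn))) (lexx _)) _.
by rewrite [leLHS](_ : _ = e^-1) //; field; rewrite gt_eqF.
Qed.

Lemma mean_potential_active j : (m + j <= n)%N ->
  mean_potential (m + j) <= (1 - e ^+ 3 / 8) ^+ j / e.
Proof.
elim: j => [|j IH] hj.
  by rewrite addn0 in hj *; rewrite expr0 mul1r; exact: mean_potential_inactive.
rewrite addnS in hj *; apply: le_trans (mean_potential_step hj) _.
have active w : step_mean e (m <= m + j)%N (walk m w (m + j)) <=
    (1 - e ^+ 3 / 8) * potential e (walk m w (m + j)) + 0.
  by rewrite leq_addr addr0; exact: step_mean_active.
apply: le_trans (ler_sum _ (fun w _ => ler_wpM2l (P_ge0 w) (active w))) _.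
rewrite mean_potential_affine addr0 [_ ^+ j.+1]exprS -mulrA.
by apply: ler_wpM2l; [exact: contraction_ge0 | exact: IH (ltnW hj)].
Qed.

End MeanPotential.

End Expectation.

Local Open Scope ring_scope.

Lemma tail_bound (R : realType) (e p : R) (k : nat) : 0 < e < 1 -> p <= 1 ->
  p <= (1 - e ^+ 3 / 8) ^+ k / e -> p <= 3 * expR (- (e ^+ 4 * k%:R / 64)).
Proof.
move=> he; have /andP[e_gt0 e_lt1] := he; move=> p_le1 p_le.
set Y := e ^+ 4 * k%:R / 64.
have [Y_small|Y_big] := lerP Y (2 / 3); first by have := expR_ge1Dx (- Y); lra.
have ie_ge1 : 1 <= e^-1 by rewrite invf_ge1 //; lra.
(* eps^3 k / 8 = Y + D, and D is large enough to absorb the factor 1/eps. *)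
set D := Y * (8 * e^-1 - 1).
have D_ge : 2 / 3 * (8 * e^-1 - 1) <= D.
  by rewrite /D ler_wpM2r //; [lra | exact: ltW].
have contract : (1 - e ^+ 3 / 8) ^+ k <= expR (- Y) * expR (- D).
  apply: (@le_trans _ _ (expR (- (e ^+ 3 / 8)) ^+ k)).
    apply: lerXn2r; rewrite ?nnegrE ?expR_ge0 ?contraction_ge0 //.
    by have := expR_ge1Dx (- (e ^+ 3 / 8)); lra.
  rewrite -expRM_natr -expRD [X in expR X](_ : _ = - Y + - D) //.
  by rewrite /D /Y; field; rewrite gt_eqF.
have slack : expR (- D) / e <= 3.
  rewrite expRN mulrC ler_pdivrMr ?expR_gt0 //.
  by have := expR_ge1Dx D; lra.
apply: (le_trans p_le); apply: le_trans (ler_wpM2r _ contract) _; first by rewrite invr_ge0 ltW.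
by rewrite -mulrA mulrC ler_wpM2r ?expR_ge0.
Qed.

Theorem mainTheorem16 (R : realType) :
  exists C : R, forall eps : R, 0 < eps < 1 ->
  forall (m k : nat) (P : {ffun (m + k).-tuple bool -> R}),
    is_distr P -> eps_martingale eps P ->
    Pr P (fun w => mu_ge0 (take m w) (drop m w))
      <= 3 * expR (- (eps ^+ 4 * (1 - C * eps) * k%:R / 64)).
Proof.
(* No O(eps) correction is needed. *)
exists 0 => eps he m k P hP hmart; rewrite mul0r subr0 mulr1.
apply: (tail_bound he (Pr_le1 _ hP)).
apply: le_trans (mean_potential_active he hP hmart (leqnn (m + k))).
apply: Pr_le_mean hP.1 _ _ => w.
  by apply: potential_ge0; case/andP: he => /ltW.
move/(mu_ge0_walk_gap (m := m) (w := w)); rewrite size_tuple leq_addr => /(_ isT).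
by case: walk => g r /= ->; exact: potential_gap0.
Qed.
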